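(* Let $(a_n)_{n\ge 0}$ and $(b_n)_{n\ge 0}$ be two sequences of nonnegative real numbers, and let $\alpha_0,\beta\in(0,1)$ be such that for every $\alpha\in(0,\alpha_0)$ the inequality $$a_{n+1}+b_{n+1}\le (1-2\alpha)a_n+\alpha a_{n-1}+\beta b_n$$ holds for all $n\ge 1$. Then there exist $\gamma\in(0,1)$ and $M>0$ such that $a_n\le \gamma^n M$ for every $n>0$. *)

From Stdlib Require Import Reals.

(* The weighted energy  E n = a n + b n + (3 alpha / 2) a (n-1)  contracts by the
   factor  max(beta, 1 - alpha/2) < 1  for any fixed admissible alpha <= 2/3: the
   recursion turns the weight on a n into 1 - alpha/2, and the new weight alpha on
   a (n-1) is 2/3 of the old one.  Since a n <= E n, the sequence a decays
   geometrically. *)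
From Stdlib Require Import Reals Lra Lia.
Open Scope R_scope.

Lemma pow_bound_of_contraction (u : nat -> R) (g : R) :
  0 <= g -> (forall n, u (S n) <= g * u n) ->
  forall n, u n <= g ^ n * u 0%nat.
Proof.
  intros g_ge0 contr n; induction n as [|n IH]; simpl; [lra|].
  rewrite Rmult_assoc.
  apply (Rle_trans _ _ _ (contr n)), Rmult_le_compat_l; assumption.
Qed.

Section Energy.

Variables (a b : nat -> R) (alpha beta : R).
Hypothesis a_ge0 : forall n, 0 <= a n.
Hypothesis b_ge0 : forall n, 0 <= b n.
Hypothesis alpha_pos : 0 < alpha.
Hypothesis alpha_le : alpha <= 2 / 3.
Hypothesis recursion : forall n : nat, (1 <= n)%nat ->
  a (S n) + b (S n) <= (1 - 2 * alpha) * a n + alpha * a (n - 1)%nat + beta * b n.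

Definition energy (n : nat) : R := a n + b n + 3 * alpha / 2 * a (n - 1)%nat.

Definition contraction_rate : R := Rmax beta (1 - alpha / 2).

Lemma a_le_energy n : a n <= energy n.
Proof.
  unfold energy; pose proof (b_ge0 n); pose proof (a_ge0 (n - 1)%nat); nra.
Qed.

Lemma energy_contracts n : (1 <= n)%nat ->
  energy (S n) <= contraction_rate * energy n.
Proof.
  intros n_ge1; unfold energy, contraction_rate.
  replace (S n - 1)%nat with n by lia.
  pose proof (recursion n n_ge1) as rec.
  pose proof (Rmax_l beta (1 - alpha / 2)) as beta_le.
  pose proof (Rmax_r beta (1 - alpha / 2)) as rate_ge.
  set (g := Rmax beta (1 - alpha / 2)) in *.
  assert (new_a : (1 - alpha / 2) * a n <= g * a n)
    by (apply Rmult_le_compat_r; [apply a_ge0 | lra]).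
  assert (new_b : beta * b n <= g * b n)
    by (apply Rmult_le_compat_r; [apply b_ge0 | lra]).
  assert (old_a : alpha * a (n - 1)%nat <= g * (3 * alpha / 2) * a (n - 1)%nat).
  { apply Rmult_le_compat_r; [apply a_ge0 | nra]. }
  lra.
Qed.

Lemma contraction_rate_bounds : beta < 1 -> 0 < contraction_rate < 1.
Proof.
  intros beta_lt1; unfold contraction_rate; split.
  - apply (Rlt_le_trans _ (1 - alpha / 2)); [lra | apply Rmax_r].
  - apply Rmax_lub_lt; lra.
Qed.

End Energy.

Theorem lemma2p8 (a b : nat -> R) (alpha0 beta : R) :
  (forall n, 0 <= a n) ->
  (forall n, 0 <= b n) ->
  0 < alpha0 < 1 ->
  0 < beta < 1 ->
  (forall alpha, 0 < alpha < alpha0 ->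
     forall n : nat, (1 <= n)%nat ->
       a (S n) + b (S n) <= (1 - 2 * alpha) * a n + alpha * a (n - 1)%nat + beta * b n) ->
  exists gamma M : R, 0 < gamma < 1 /\ 0 < M /\
    forall n : nat, (0 < n)%nat -> a n <= gamma ^ n * M.
Proof.
  intros a_ge0 b_ge0 alpha0_bounds beta_bounds recursion.
  set (alpha := alpha0 / 2).
  assert (rec : forall n, (1 <= n)%nat -> a (S n) + b (S n) <=
            (1 - 2 * alpha) * a n + alpha * a (n - 1)%nat + beta * b n)
    by (apply recursion; unfold alpha; lra).
  set (g := contraction_rate alpha beta).
  set (E1 := energy a b alpha 1).
  assert (alpha_bounds : 0 < alpha <= 2 / 3) by (unfold alpha; lra).
  assert (g_bounds : 0 < g < 1)
    by (apply contraction_rate_bounds; lra).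
  assert (a_le_E : forall n, a n <= energy a b alpha n)
    by (apply a_le_energy; auto; lra).
  assert (E1_ge0 : 0 <= E1)
    by (apply (Rle_trans _ (a 1%nat)); [apply a_ge0 | apply a_le_E]).
  assert (decay : forall m, energy a b alpha (S m) <= g ^ m * E1).
  { apply (pow_bound_of_contraction (fun m => energy a b alpha (S m))); [lra|].
    intros m; apply (energy_contracts a b alpha beta); auto; lra || lia. }
  exists g, (E1 / g + 1); split; [exact g_bounds|]; split.
  - assert (0 <= E1 / g) by (apply Rmult_le_pos; [lra | apply Rlt_le, Rinv_0_lt_compat; lra]); lra.
  - intros [|m] n_pos; [lia|].
    pose proof (Rle_trans _ _ _ (a_le_E (S m)) (decay m)).
    pose proof (pow_le g m ltac:(lra)).
    replace (g ^ S m * (E1 / g + 1)) with (g ^ m * E1 + g ^ S m) by (simpl; field; lra).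
    simpl; nra.
Qed.
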